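(* Let $R$ be a commutative ring, $M$ an $R$-module, $y_1,\ldots,y_r\in R$, and let $i>0$ be an integer. Assume that for all $A\subseteq\{1,\ldots,r\}$ and all $s$ with $\max A<s\le r$ one has $y_sH_i(y_A;M)=0$. Then for all $A\subseteq\{1,\ldots,r\}$ the canonical map $$\partial\colon H_{i+1}(y_A;M)\to\bigoplus_{j\in A}H_i(y_{A_j};M),\quad \partial([z])=(\partial_j([z]))_{j\in A},$$ is injective.
   Context: For $A\subseteq\{1,\ldots,r\}$, $y_A=\{y_j:j\in A\}$ and for $j\in A$, $A_j=A\setminus\{j\}$; $H_i(y_A;M)$ is the Koszul homology of $M$ with respect to $y_A$, the Koszul complex having exterior basis $e_j$, $j\in A$. The map $\partial_j\colon H_{i+1}(y_A;M)\to H_i(y_{A_j};M)$ is defined as follows: a cycle $z\in Z_{i+1}(y_A;M)$ can be uniquely written $z=z_0+z_1\wedge e_j$ with $z_0\in K_{i+1}(y_{A_j};M)$ and $z_1\in Z_i(y_{A_j};M)$, and $\partial_j([z])=[z_1]$ (it is the connecting map in the long exact sequence $\cdots\to H_{i+1}(y_{A_j};M)\to H_{i+1}(y_A;M)\to H_i(y_{A_j};M)\xrightarrow{y_j}\cdots$). *)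

(* Koszul complex of M w.r.t. y_A, A ⊆ {0,..,r-1}, realised
   concretely: a chain is a function c : {set 'I_r} -> M, c B being the
   coefficient of e_B = e_{b_1} ∧ ... ∧ e_{b_k} (b_1 < ... < b_k). *)
From HB Require Import structures.
From mathcomp Require Import all_boot all_order all_algebra.
Set Implicit Arguments. Unset Strict Implicit. Unset Printing Implicit Defensive.
Import GRing.Theory.
Local Open Scope ring_scope.

Section Koszul.
Variables (R : comPzRingType) (M : lmodType R) (r : nat) (y : 'I_r -> R).

Definition kchain (A : {set 'I_r}) (i : nat) (c : {set 'I_r} -> M) : Prop :=
  forall B : {set 'I_r}, ~~ ((B \subset A) && (#|B| == i)) -> c B = 0.

(* Koszul differential:
   d(e_{b_1}∧..∧e_{b_k}) = sum_l (-1)^(l-1) y_{b_l} e_{B \ b_l} *)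
Definition kdiff (c : {set 'I_r} -> M) : {set 'I_r} -> M :=
  fun C => \sum_(k : 'I_r | k \notin C)
             ((-1) ^+ #|[set b in C | (b < k)%N]| * y k) *: c (k |: C).

Definition kcycle (A : {set 'I_r}) (i : nat) (c : {set 'I_r} -> M) : Prop :=
  kchain A i c /\ forall C, kdiff c C = 0.

Definition kboundary (A : {set 'I_r}) (i : nat) (c : {set 'I_r} -> M) : Prop :=
  exists w, kchain A i.+1 w /\ forall C, c C = kdiff w C.

(* For z = z_0 + z_1 ∧ e_j (z_0 not involving e_j), this is z_1:
   e_C ∧ e_j = (-1)^#{c in C | c > j} e_{C ∪ {j}}. *)
Definition kpart (j : 'I_r) (z : {set 'I_r} -> M) : {set 'I_r} -> M :=
  fun C => if j \in C then 0
           else (-1) ^+ #|[set c in C | (j < c)%N]| *: z (j |: C).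

End Koszul.

(* Induct on the largest index j of A.  If the component of a cycle z along
   e_j is the boundary d w, then z' := z - d (w ∧ e_j) is a cycle that no
   longer involves e_j, so it lives on A \ {j}, and by induction it suffices
   that its components z'_k are boundaries over A \ {j, k}.  Each z'_k is a
   boundary over A \ {k}, and since y_j kills H_i(y_{A \ {j,k}}; M) the long
   exact sequence for adjoining y_j shows that H_i(y_{A \ {j,k}}; M) maps
   injectively into H_i(y_{A \ {k}}; M), so z'_k is already a boundary over
   A \ {j, k}. *)
From mathcomp Require Import all_boot all_order all_algebra.
From mathcomp Require Import ring.
Set Implicit Arguments. Unset Strict Implicit. Unset Printing Implicit Defensive.
Import GRing.Theory.
Local Open Scope ring_scope.

Lemma card_sep_setU1 (T : finType) (P : pred T) (a : T) (C : {set T}) :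
  a \notin C -> #|[set x in a |: C | P x]| = (P a + #|[set x in C | P x]|)%N.
Proof.
move=> aC; case Pa: (P a); last first.
  by apply: eq_card => x; rewrite !inE; case: eqP => // ->; rewrite Pa (negbTE aC).
have -> : [set x in a |: C | P x] = a |: [set x in C | P x].
  by apply/setP => x; rewrite !inE; case: eqP => // ->; rewrite Pa.
by rewrite cardsU1 inE (negbTE aC).
Qed.

Lemma card_ltn_gtn n (j : 'I_n) (C : {set 'I_n}) : j \notin C ->
  (#|[set b in C | (b < j)%N]| + #|[set b in C | (j < b)%N]|)%N = #|C|.
Proof.
move=> jC; rewrite -(cardsID [set b : 'I_n | (b < j)%N] C) setIdE.
congr (_ + _)%N; apply: eq_card => b; rewrite !inE.
case bC: (b \in C); rewrite ?andbF //= andbT -leqNgt ltn_neqAle.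
by case: eqP => [/ord_inj eq_jb|//]; rewrite eq_jb bC in jC.
Qed.

Lemma mulr_sign_sqr (R : pzRingType) n : (-1) ^+ n * (-1) ^+ n = 1 :> R.
Proof. by rewrite -exprD addnn -mul2n exprM sqrrN !expr1n. Qed.

Lemma sum_antisym_eq0 (V : zmodType) n (H : 'I_n -> 'I_n -> V) :
  (forall k, H k k = 0) -> (forall k l, H k l = - H l k) ->
  \sum_k \sum_l H k l = 0.
Proof.
move=> H0 HN.
pose T := \sum_(k : 'I_n) \sum_(l : 'I_n) (if (k < l)%N then H k l else 0).
have split_diag : \sum_k \sum_l H k l
    = T + \sum_(k : 'I_n) \sum_(l : 'I_n) (if (l < k)%N then H k l else 0).
  rewrite -big_split; apply: eq_bigr => k _; rewrite -big_split.
  apply: eq_bigr => l _; case: ltngtP => [_|_|/ord_inj->] /=.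
  - by rewrite addr0.
  - by rewrite add0r.
  - by rewrite H0 addr0.
have lower_T : \sum_(k : 'I_n) \sum_(l : 'I_n) (if (l < k)%N then H k l else 0) = - T.
  rewrite exchange_big -sumrN; apply: eq_bigr => l _; rewrite -sumrN.
  by apply: eq_bigr => k _; case: ifP; rewrite ?oppr0 // HN.
by rewrite split_diag lower_T subrr.
Qed.

Section Koszul.
Variables (R : comPzRingType) (M : lmodType R) (r : nat) (y : 'I_r -> R).
Implicit Types (f g c v w : {set 'I_r} -> M) (A B C D : {set 'I_r}) (j k : 'I_r).

Lemma kdiff_ext f g C : (forall D, f D = g D) -> kdiff y f C = kdiff y g C.
Proof. by move=> fg; apply: eq_bigr => k _; rewrite fg. Qed.

Lemma kdiff0 C : kdiff y (fun _ => 0 : M) C = 0.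
Proof. by rewrite /kdiff big1 // => k _; rewrite scaler0. Qed.

Lemma kdiffD f g C : kdiff y (fun D => f D + g D) C = kdiff y f C + kdiff y g C.
Proof. by rewrite /kdiff -big_split; apply: eq_bigr => k _; rewrite scalerDr. Qed.

Lemma kdiffB f g C : kdiff y (fun D => f D - g D) C = kdiff y f C - kdiff y g C.
Proof. by rewrite /kdiff -sumrB; apply: eq_bigr => k _; rewrite scalerBr. Qed.

Lemma kdiffZ a f C : kdiff y (fun D => a *: f D) C = a *: kdiff y f C.
Proof.
by rewrite /kdiff scaler_sumr; apply: eq_bigr => k _; rewrite !scalerA mulrC.
Qed.

Lemma kdiff_kdiff c C : kdiff y (kdiff y c) C = 0.
Proof.
pose H k l := if (k \notin C) && (l \notin k |: C) then
   ((-1) ^+ #|[set b in C | (b < k)%N]| * y k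
    * ((-1) ^+ #|[set b in k |: C | (b < l)%N]| * y l)) *: c (l |: (k |: C))
  else 0.
transitivity (\sum_k \sum_l H k l).
  rewrite /kdiff big_mkcond; apply: eq_bigr => k _; rewrite /H.
  case: ifP => kC /=; last by rewrite big1.
  rewrite scaler_sumr big_mkcond; apply: eq_bigr => l _.
  by case: ifP => _; rewrite ?scaler0 // scalerA.
apply: sum_antisym_eq0 => [k|k l]; first by rewrite /H setU11 andbF.
rewrite /H !inE; case: (eqVneq k l) => [->|neq_kl] /=; first by rewrite andbF oppr0.
case kC: (k \in C); case lC: (l \in C); rewrite /= ?oppr0 //.
rewrite setUCA -scaleNr; congr (_ *: _).
rewrite (card_sep_setU1 (fun b : 'I_r => (b < l)%N)) ?kC //.
rewrite (card_sep_setU1 (fun b : 'I_r => (b < k)%N)) ?lC // !exprD.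
case: ltngtP => [_|_|/ord_inj eq_kl]; last by rewrite eq_kl eqxx in neq_kl.
  by rewrite expr1 expr0; ring.
by rewrite expr1 expr0; ring.
Qed.

Lemma kpart_ext j f g C : (forall D, f D = g D) -> kpart j f C = kpart j g C.
Proof. by move=> fg; rewrite /kpart fg. Qed.

Lemma kpartB j f g C : kpart j (fun D => f D - g D) C = kpart j f C - kpart j g C.
Proof. by rewrite /kpart; case: ifP; rewrite ?subr0 // scalerBr. Qed.

Lemma kpart_kdiff j c C : kpart j (kdiff y c) C = kdiff y (kpart j c) C.
Proof.
rewrite /kpart /kdiff; case: ifP => jC.
  by rewrite big1 // => l _; rewrite inE jC orbT scaler0.
rewrite scaler_sumr (big_mkcond (fun l => l \notin j |: C)).
rewrite (big_mkcond (fun l => l \notin C)); apply: eq_bigr => l _.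
rewrite !inE; case: (eqVneq l j) => [->|neq_lj] /=.
  by case: ifP; rewrite ?scaler0.
case: ifP => lC //=; rewrite jC !scalerA setUCA.
rewrite (card_sep_setU1 (fun b : 'I_r => (b < l)%N)) ?jC //.
rewrite (card_sep_setU1 (fun b : 'I_r => (j < b)%N)) ?lC //.
by congr (_ *: _); rewrite !exprD; ring.
Qed.

Lemma kpart_setD1 j f D : j \in D ->
  f D = (-1) ^+ #|[set b in D :\ j | (j < b)%N]| *: kpart j f (D :\ j).
Proof.
move=> jD; rewrite /kpart setD11 setD1K // scalerA.
by rewrite mulr_sign_sqr scale1r.
Qed.

(* Wedge product with e_j on the right: kpart j is its left inverse. *)
Definition kext j f : {set 'I_r} -> M := fun D =>
  if j \in D then (-1) ^+ #|[set b in D :\ j | (j < b)%N]| *: f (D :\ j) else 0.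

Lemma kpart_kext j f C : (forall D, j \in D -> f D = 0) -> kpart j (kext j f) C = f C.
Proof.
move=> f_j; rewrite /kpart /kext; case: ifP => [/f_j -> //|jC].
by rewrite setU11 setU1K ?jC // scalerA mulr_sign_sqr scale1r.
Qed.

Definition kdrop j f : {set 'I_r} -> M := fun D => if j \in D then 0 else f D.

Lemma kdiff_kdrop_mem j v C : j \in C -> kdiff y (kdrop j v) C = 0.
Proof.
by move=> jC; rewrite /kdiff big1 // => k _; rewrite /kdrop inE jC orbT scaler0.
Qed.

Lemma kdiff_kdrop j v C : j \notin C ->
  kdiff y v C = kdiff y (kdrop j v) C + ((-1) ^+ #|C| * y j) *: kpart j v C.
Proof.
move=> jC; rewrite /kdiff (bigD1 j jC) [in RHS](bigD1 j jC) /= /kdrop setU11.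
rewrite scaler0 add0r addrC; congr (_ + _).
  apply: congr_big => // k /andP[_ neq_kj].
  by rewrite in_setU1 (negbTE jC) orbF eq_sym (negbTE neq_kj).
rewrite /kpart (negbTE jC) scalerA -(card_ltn_gtn jC) exprD.
by congr (_ *: _); rewrite mulrAC -(mulrA _ _ (_ ^+ _)) mulr_sign_sqr mulr1.
Qed.

Lemma kchain_sub A B i c : A \subset B -> kchain A i c -> kchain B i c.
Proof.
move=> sAB cA D nD; apply: cA; apply: contra nD => /andP[sDA ->].
by rewrite (subset_trans sDA sAB).
Qed.

Lemma kchainD A i f g : kchain A i f -> kchain A i g -> kchain A i (fun D => f D + g D).
Proof. by move=> fA gA D nD; rewrite fA // gA // addr0. Qed.

Lemma kchainB A i f g : kchain A i f -> kchain A i g -> kchain A i (fun D => f D - g D).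
Proof. by move=> fA gA D nD; rewrite fA // gA // subr0. Qed.

Lemma kchainZ A i a f : kchain A i f -> kchain A i (fun D => a *: f D).
Proof. by move=> fA D nD; rewrite fA // scaler0. Qed.

Lemma kchain_eq0_notin A i c j D : kchain A i c -> j \notin A -> j \in D -> c D = 0.
Proof.
move=> cA jA jD; apply: cA; rewrite negb_and; apply/orP; left.
by apply: contra jA => /subsetP; apply.
Qed.

Lemma kchain_set0 i c C : kchain set0 i.+1 c -> c C = 0.
Proof. by move=> c0; apply: c0; rewrite subset0; case: eqP => // ->; rewrite cards0. Qed.

Lemma kchain_signE A i c C : kchain A i c -> (-1) ^+ #|C| *: c C = (-1) ^+ i *: c C.
Proof.
move=> cA; case: (eqVneq #|C| i) => [-> //|neq_Ci].
by rewrite cA ?scaler0 // negb_and neq_Ci orbT.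
Qed.

Lemma kchain_kdiff A i c : kchain A i.+1 c -> kchain A i (kdiff y c).
Proof.
move=> cA D nD; rewrite /kdiff big1 // => k kD; rewrite cA ?scaler0 //.
apply: contra nD => /andP[]; rewrite subUset cardsU1 kD => /andP[_ ->].
by rewrite add1n eqSS.
Qed.

Lemma kchain_kpart A i j c : kchain A i.+1 c -> kchain (A :\ j) i (kpart j c).
Proof.
move=> cA D nD; rewrite /kpart; case: ifP => jD //.
rewrite cA ?scaler0 //; apply: contra nD => /andP[].
rewrite subUset sub1set cardsU1 jD add1n eqSS => /andP[_ sDA] ->.
by rewrite andbT subsetD1 sDA jD.
Qed.

Lemma kchain_kext A i j f : j \in A -> kchain (A :\ j) i f -> kchain A i.+1 (kext j f).
Proof.
move=> jA fA D nD; rewrite /kext; case: ifP => jD //.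
rewrite fA ?scaler0 //; apply: contra nD => /andP[sDA /eqP card_D].
rewrite (cardsD1 j D) jD card_D eqxx andbT -(setD1K jD) subUset sub1set jA.
by apply: subset_trans sDA (subD1set _ _).
Qed.

Lemma kchain_kdrop A i j v : kchain A i v -> kchain (A :\ j) i (kdrop j v).
Proof.
move=> vA D nD; rewrite /kdrop; case: ifP => jD //; apply: vA.
by apply: contra nD => /andP[sDA ->]; rewrite subsetD1 sDA jD.
Qed.

Lemma kchain_setD1 A i j c :
  kchain A i c -> (forall C, kpart j c C = 0) -> kchain (A :\ j) i c.
Proof.
move=> cA cj0 D nD; case: (boolP ((D \subset A) && (#|D| == i))); last exact: cA.
case/andP=> sDA card_D; have jD : j \in D.
  by apply: contraNT nD => jD; rewrite subsetD1 sDA jD card_D.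
by rewrite (kpart_setD1 c jD) cj0 scaler0.
Qed.

Lemma kpart_eq0_notin A i j c C : kchain A i c -> j \notin A -> kpart j c C = 0.
Proof.
move=> cA jA; rewrite /kpart; case: ifP => // _.
by rewrite (kchain_eq0_notin cA jA (setU11 j C)) scaler0.
Qed.

Lemma kboundary_ext A i f g :
  (forall C, f C = g C) -> kboundary y A i f -> kboundary y A i g.
Proof. by move=> fg [w [wA dw]]; exists w; split=> // C; rewrite -fg. Qed.

Lemma kboundary_sub A B i c : A \subset B -> kboundary y A i c -> kboundary y B i c.
Proof. by move=> sAB [w [wA dw]]; exists w; split=> //; apply: kchain_sub wA. Qed.

Lemma kboundary_kdiff A i w : kchain A i.+1 w -> kboundary y A i (kdiff y w).
Proof. by move=> wA; exists w. Qed.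

Lemma kboundaryD A i f g : kboundary y A i f -> kboundary y A i g ->
  kboundary y A i (fun C => f C + g C).
Proof.
move=> [v [vA dv]] [w [wA dw]]; exists (fun D => v D + w D).
by split=> [|C]; [apply: kchainD | rewrite kdiffD dv dw].
Qed.

Lemma kboundaryB A i f g : kboundary y A i f -> kboundary y A i g ->
  kboundary y A i (fun C => f C - g C).
Proof.
move=> [v [vA dv]] [w [wA dw]]; exists (fun D => v D - w D).
by split=> [|C]; [apply: kchainB | rewrite kdiffB dv dw].
Qed.

Section Injectivity.
Variable i : nat.
Hypothesis y_kills_homology : forall A (s : 'I_r),
  (forall a, a \in A -> (a < s)%N) ->
  forall z : {set 'I_r} -> M, kcycle y A i z -> kboundary y A i (fun C => y s *: z C).

Definition partial_injective A := forall z : {set 'I_r} -> M, kcycle y A i.+1 z ->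
  (forall j, j \in A -> kboundary y (A :\ j) i (kpart j z)) -> kboundary y A i.+1 z.

(* If c = d v with v = v_0 + v_1 ∧ e_j, then v_1 is a cycle over B and
   c = d v_0 ± y_j v_1, and y_j v_1 is a boundary over B by hypothesis. *)
Lemma kboundary_setU1_max B j c : (forall b, b \in B -> (b < j)%N) ->
  kchain B i c -> kboundary y (j |: B) i c -> kboundary y B i c.
Proof.
move=> ltBj cB [v [vBj dv]].
have jB : j \notin B by apply/negP => /ltBj; rewrite ltnn.
have v1B : kchain B i (kpart j v) by rewrite -(setU1K jB); apply: kchain_kpart.
have v1_cycle C : kdiff y (kpart j v) C = 0.
  by rewrite -kpart_kdiff -(kpart_ext _ _ dv) (kpart_eq0_notin _ cB jB).
have [w [wB dw]] := y_kills_homology ltBj (conj v1B v1_cycle).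
exists (fun D => kdrop j v D + (-1) ^+ i *: w D); split.
  apply: kchainD; last exact: kchainZ.
  by rewrite -(setU1K jB); apply: kchain_kdrop.
move=> C; rewrite kdiffD kdiffZ -dw.
case: (boolP (j \in C)) => jC.
  by rewrite (kchain_eq0_notin cB jB jC) kdiff_kdrop_mem // /kpart jC !scaler0 addr0.
rewrite dv (kdiff_kdrop _ jC) mulrC -scalerA (kchain_signE _ v1B).
by rewrite !scalerA mulrC.
Qed.

Lemma partial_injective_set0 : partial_injective set0.
Proof.
move=> z [z0 _] _; exists (fun _ => 0); split=> // C.
by rewrite kdiff0 (kchain_set0 _ z0).
Qed.

Lemma partial_injective_setD1 A j : j \in A ->
  (forall a, a \in A :\ j -> (a < j)%N) ->
  partial_injective (A :\ j) -> partial_injective A.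
Proof.
move=> jA ltAj IH z [zA dz] z_parts.
have [w [wAj dw]] := z_parts j jA.
pose u := kext j w.
have uA : kchain A i.+2 u := kchain_kext jA wAj.
pose z' C := z C - kdiff y u C.
have z'Aj : kchain (A :\ j) i.+1 z'.
  apply: kchain_setD1 (kchainB zA (kchain_kdiff uA)) _ => C.
  have w_j D : j \in D -> w D = 0 by apply: kchain_eq0_notin wAj _; rewrite setD11.
  by rewrite kpartB dw kpart_kdiff (kdiff_ext _ (fun D => kpart_kext D w_j)) subrr.
have z'_cycle C : kdiff y z' C = 0 by rewrite kdiffB dz kdiff_kdiff subrr.
have z'_parts k : k \in A :\ j -> kboundary y (A :\ j :\ k) i (kpart k z').
  move=> kAj; apply: (kboundary_setU1_max (j := j) _ (kchain_kpart (j := k) z'Aj)).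
    by move=> b /setD1P[_]; apply: ltAj.
  apply: kboundary_sub (_ : A :\ k \subset j |: (A :\ j :\ k)) _.
    by apply/subsetP => b; rewrite !inE => /andP[-> ->]; case: eqP.
  have kA : k \in A by case/setD1P: kAj.
  have d_uk := kboundary_kdiff (kchain_kpart (j := k) uA).
  apply: kboundary_ext (kboundaryB (z_parts k kA) d_uk) => C.
  by rewrite kpartB kpart_kdiff.
have z'_bd := IH z' (conj z'Aj z'_cycle) z'_parts.
apply: kboundary_ext (kboundaryD (kboundary_sub (subD1set A j) z'_bd) (kboundary_kdiff uA)).
by move=> C; rewrite subrK.
Qed.

Lemma partial_injective_bounded n A : (forall a, a \in A -> (a < n)%N) ->
  partial_injective A.
Proof.
elim: n A => [|n IH] A ltAn.
  have -> : A = set0 by apply/setP => a; rewrite inE; apply/negbTE/negP => /ltAn.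
  exact: partial_injective_set0.
case: (pickP [pred a in A | val a == n]) => [j /andP[jA /eqP jn] | noA]; last first.
  apply: IH => a aA; move: (ltAn a aA) (noA a); rewrite /= aA ltnS leq_eqVlt.
  by case: eqP.
have ltAj a : a \in A :\ j -> (a < j)%N.
  case/setD1P=> neq_aj aA; rewrite ltn_neqAle -ltnS jn ltAn // andbT.
  by apply: contra neq_aj; rewrite -jn => /eqP/ord_inj ->.
have ltAn' a : a \in A :\ j -> (a < n)%N by rewrite -jn; apply: ltAj.
exact: (partial_injective_setD1 jA ltAj (IH _ ltAn')).
Qed.

End Injectivity.
End Koszul.

Theorem lemma2p1 (R : comPzRingType) (M : lmodType R) (r : nat) (y : 'I_r -> R)
    (i : nat) (hi : (0 < i)%N)
    (hyp : forall (A : {set 'I_r}) (s : 'I_r),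
        (forall a, a \in A -> (a < s)%N) ->
        forall z : {set 'I_r} -> M, kcycle y A i z -> kboundary y A i (fun C => y s *: z C)) :
  forall (A : {set 'I_r}) (z : {set 'I_r} -> M),
    kcycle y A i.+1 z ->
    (forall j, j \in A -> kboundary y (A :\ j) i (kpart j z)) ->
    kboundary y A i.+1 z.
Proof.
by move=> A; apply: (partial_injective_bounded hyp (n := r)) => a _; apply: ltn_ord.
Qed.
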